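(* Let $F_1,\ldots,F_m$ be subsets of $[n]$ with $|F_i|=d$ for all $i$, and let $\Delta$ be the simplicial complex they generate. Let $m_i=\prod_{j\in F_i}X_j$ and $$f(X_1,\ldots,X_n,Y_1,\ldots,Y_m)=\sum_{i=1}^m Y_i\, m_i(X_1,\ldots,X_n)\in\mathbb{Q}[X_1,\ldots,X_n,Y_1,\ldots,Y_m].$$ Then a basis of the linear space $\partial^+ f$ consists of the following $2|\Delta|$ polynomials: (i) the $|\Delta|$ monomials $\prod_{j\in F}X_j$ for $F$ a face of $\Delta$; (ii) the $|\Delta|$ polynomials $\partial f/\partial F$ for $F$ a face of $\Delta$, where $\partial f/\partial F$ is obtained from $f$ by differentiating once with respect to each variable $X_j$ with $j\in F$. In particular $\dim\partial^+ f=2|\Delta|$.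
   Context: The simplicial complex generated by $F_1,\ldots,F_m\subseteq[n]$ is the family $\Delta$ of all nonempty $Y\subseteq[n]$ with $Y\subseteq F_i$ for some $i$; its elements are called faces and $|\Delta|$ is their number. For a polynomial $f$, $\partial^+ f$ denotes the linear space spanned by the partial derivatives of $f$ of order $r$ for all $r$ with $1\le r\le\deg(f)-1$. *)

From HB Require Import structures.
From mathcomp Require Import all_boot all_algebra.
From mathcomp Require Import mpoly.
Set Implicit Arguments. Unset Strict Implicit. Unset Printing Implicit Defensive.
Import GRing.Theory.
Local Open Scope ring_scope.

(* Polynomial ring Q[X_1..X_n, Y_1..Y_m] is {mpoly rat[n + m]};
   X_j = 'X_(lshift m j) (j : 'I_n), Y_i = 'X_(rshift n i) (i : 'I_m). *)

(* Total degree of a multivariate polynomial (msize = degree + 1, 0 for p = 0). *)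
Definition tdeg (k : nat) (p : {mpoly rat[k]}) : nat := (msize p).-1.

Definition in_span (k : nat) (S : {mpoly rat[k]} -> Prop) (p : {mpoly rat[k]}) : Prop :=
  exists (l : nat) (g : 'I_l -> {mpoly rat[k]}) (c : 'I_l -> rat),
    (forall i, S (g i)) /\ p = \sum_(i < l) c i *: g i.

Definition dplus (k : nat) (f : {mpoly rat[k]}) : {mpoly rat[k]} -> Prop :=
  in_span (fun q => exists mm : 'X_{1..k},
     (1 <= mdeg mm)%N /\ (mdeg mm <= tdeg f - 1)%N /\ q = mderivm mm f).

Definition is_basis (k : nat) (V : {mpoly rat[k]} -> Prop) (I : finType)
    (b : I -> {mpoly rat[k]}) : Prop :=
  [/\ (forall i, V (b i)),
      (forall c : I -> rat, \sum_i c i *: b i = 0 -> forall i, c i = 0) &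
      (forall p, V p -> exists c : I -> rat, p = \sum_i c i *: b i)].

Definition has_dim (k : nat) (V : {mpoly rat[k]} -> Prop) (l : nat) : Prop :=
  exists b : 'I_l -> {mpoly rat[k]}, is_basis V b.

Definition is_face (n m : nat) (Fs : 'I_m -> {set 'I_n}) (Y : {set 'I_n}) : bool :=
  (Y != set0) && [exists i, Y \subset Fs i].

Definition face_t (n m : nat) (Fs : 'I_m -> {set 'I_n}) : finType :=
  {Y : {set 'I_n} | is_face Fs Y}.

Definition fpoly (n m : nat) (Fs : 'I_m -> {set 'I_n}) : {mpoly rat[n + m]} :=
  \sum_(i < m) 'X_(rshift n i) * \prod_(j in Fs i) 'X_(lshift m j).

Definition xmon (n m : nat) (F : {set 'I_n}) : {mpoly rat[n + m]} :=
  \prod_(j in F) 'X_(lshift m j).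

Definition dF (n m : nat) (F : {set 'I_n}) (f : {mpoly rat[n + m]}) : {mpoly rat[n + m]} :=
  foldr (fun j p => mderiv (lshift m j) p) f (enum F).

Definition lemma6_family (n m : nat) (Fs : 'I_m -> {set 'I_n})
    (x : (face_t Fs + face_t Fs)%type) : {mpoly rat[n + m]} :=
  match x with
  | inl F => xmon m (val F)
  | inr F => dF (val F) (fpoly Fs)
  end.
Arguments lemma6_family {n m} Fs x.

From HB Require Import structures.
From mathcomp Require Import all_boot all_algebra.
From mathcomp Require Import mpoly.
From mathcomp Require Import zify.
Set Implicit Arguments. Unset Strict Implicit. Unset Printing Implicit Defensive.
Import GRing.Theory.
Local Open Scope ring_scope.

(** The polynomial [f] is a sum of squarefree monomials [X^T_i] with
    [T_i = {Y_i} ∪ F_i] of degree [d + 1], so a derivative of order between [1]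
    and [d] is nonzero only along a squarefree set [S ⊆ T_i]. If [S] contains
    some [Y_i], only the [i]-th term survives and leaves the monomial of the face
    [T_i \ S]; otherwise [S] itself is a face and the derivative is [∂f/∂S].
    Conversely the face monomial [X^F] with [F ⊆ F_i] is [∂f/∂(T_i \ F)].
    Independence follows from a dual family of monomials: [X^F] occurs only in
    the face monomial of [F], and [X^(T_i \ F)] only in [∂f/∂F], since every
    term of [∂f/∂G] contains a [Y]-variable and [T_i \ G] determines [i] and [G]. *)

Section SquarefreeMonomials.
Variables (k : nat) (R : nzRingType).
Implicit Types (S T : {set 'I_k}) (mm : 'X_{1..k}).

Definition mnm_of_set S : 'X_{1..k} := [multinom nat_of_bool (x \in S) | x < k].

Lemma mnm_of_setE S x : mnm_of_set S x = (x \in S).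
Proof. exact: mnmE. Qed.

Lemma mnm_of_set_inj : injective mnm_of_set.
Proof.
move=> S T /mnmP eST; apply/setP => x.
by have := eST x; rewrite !mnm_of_setE; do 2 case: (_ \in _).
Qed.

Lemma mdeg_mnm_of_set S : mdeg (mnm_of_set S) = #|S|.
Proof.
rewrite mdegE -sum1_card [RHS]big_mkcond /=.
by apply: eq_bigr => x _; rewrite mnm_of_setE; case: (_ \in _).
Qed.

Lemma lem_mnm_of_set S T : (mnm_of_set S <= mnm_of_set T)%MM = (S \subset T).
Proof.
apply/mnm_lepP/subsetP => [le_ST x xS | sST x].
  by have := le_ST x; rewrite !mnm_of_setE xS; case: (x \in T).
by rewrite !mnm_of_setE; case xS: (x \in S); rewrite // sST.
Qed.

Lemma lem_mnm_of_setP mm T :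
  (mm <= mnm_of_set T)%MM -> exists2 S, mm = mnm_of_set S & S \subset T.
Proof.
move/mnm_lepP => le_mT; exists [set x | mm x != 0%N].
  apply/mnmP => x; rewrite mnm_of_setE inE; have := le_mT x.
  by rewrite mnm_of_setE; case: (x \in T); case: (mm x) => [|[]].
apply/subsetP => x; rewrite inE; have := le_mT x.
by rewrite mnm_of_setE; case: (x \in T); case: (mm x).
Qed.

Lemma mnm_of_setB S T :
  S \subset T -> (mnm_of_set T - mnm_of_set S)%MM = mnm_of_set (T :\: S).
Proof.
move/subsetP => sST; apply/mnmP => x; rewrite mnmBE !mnm_of_setE inE.
by case xS: (x \in S); [rewrite sST | case: (x \in T)].
Qed.

Lemma sum_mnm1_set S : (\sum_(x in S) U_(x))%MM = mnm_of_set S.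
Proof.
apply/mnmP => x; rewrite mnm_sumE mnm_of_setE.
under eq_bigr do rewrite mnm1E.
rewrite big_mkcond /= (bigD1 x) //= eqxx big1 ?addn0 => [|y /negbTE ->].
  by case: (x \in S).
by case: (y \in S).
Qed.

Lemma mderivm_mnm_of_set mm T :
  ('X_[mnm_of_set T] : {mpoly R[k]})^`M[mm] =
    if (mm <= mnm_of_set T)%MM then 'X_[(mnm_of_set T - mm)%MM] else 0.
Proof.
rewrite mderivmX; case: ifP => [/mnm_lepP le_mT | /negbT].
  rewrite big1 ?scale1r // => x _; have := le_mT x; rewrite mnm_of_setE.
  by case: (x \in T); case: (mm x) => [|[]].
rewrite negb_forall => /existsP [x]; rewrite -ltnNge => lt_Tm.
by rewrite (bigD1 x) //= ffact_small // mul0n scale0r.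
Qed.

Lemma mderivm_sum_mnm1 (s : seq 'I_k) (p : {mpoly R[k]}) :
  p^`M[\sum_(x <- s) U_(x)] = foldr (@mderiv k R) p s.
Proof.
elim: s => [|x s IHs] /=; first by rewrite big_nil mderivm0m.
by rewrite big_cons addmC mderivmDm IHs mderivmU1m.
Qed.

End SquarefreeMonomials.

Section FiniteSpan.
Variables (k : nat) (I : finType) (b : I -> {mpoly rat[k]}).

Definition spanned p := exists c : I -> rat, p = \sum_i c i *: b i.

Lemma spanned0 : spanned 0.
Proof. by exists (fun=> 0); rewrite big1 // => i _; rewrite scale0r. Qed.

Lemma spanned_gen x : spanned (b x).
Proof.
exists (fun y => (y == x)%:R); rewrite (bigD1 x) //= eqxx scale1r big1 ?addr0 //.
by move=> y /negbTE ->; rewrite scale0r.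
Qed.

Lemma spanned_in_span (S : {mpoly rat[k]} -> Prop) p :
  (forall q, S q -> spanned q) -> in_span S p -> spanned p.
Proof.
move=> spanS [l [g [c [Sg ->]]]]; apply: big_ind => [||j _].
- exact: spanned0.
- move=> _ _ [c1 ->] [c2 ->]; exists (fun i => c1 i + c2 i).
  by rewrite -big_split; apply: eq_bigr => i _; rewrite scalerDl.
- have [c' ->] := spanS _ (Sg j); exists (fun i => c j * c' i).
  by rewrite scaler_sumr; apply: eq_bigr => i _; rewrite scalerA.
Qed.

Lemma free_of_mcoeff_dual :
  (forall x, exists u, forall y, (b y)@_u = (y == x)%:R) ->
  forall c : I -> rat, \sum_i c i *: b i = 0 -> forall x, c x = 0.
Proof.
move=> dual c sum0 x; have [u bu] := dual x; have := congr1 (mcoeff u) sum0.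
rewrite mcoeff0 raddf_sum (bigD1 x) //= mcoeffZ bu eqxx mulr1 big1 ?addr0 //.
by move=> y /negbTE nyx; rewrite mcoeffZ bu nyx mulr0.
Qed.

Lemma in_span_gen (S : {mpoly rat[k]} -> Prop) p : S p -> in_span S p.
Proof. by exists 1%N, (fun=> p), (fun=> 1); rewrite big_ord1 scale1r. Qed.

Lemma has_dim_card (V : {mpoly rat[k]} -> Prop) : is_basis V b -> has_dim V #|I|.
Proof.
case=> Vb free spanV; have [rank enumK enum_valK] := enum_val_bij I.
have sum_enum_val c :
    \sum_i c i *: b i = \sum_(j < #|I|) c (enum_val j) *: b (enum_val j).
  rewrite (reindex (fun j : 'I_#|I| => enum_val j)) //=.
  by apply: onW_bij; exact: enum_val_bij.
exists (fun j => b (enum_val j)); split => [j | c sum0 j | p /spanV [c ->]].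
- exact: Vb.
- have := free (fun x => c (rank x)); rewrite sum_enum_val.
  by under eq_bigr do rewrite enumK; move/(_ sum0 (enum_val j)); rewrite enumK.
- by exists (fun j => c (enum_val j)); apply: sum_enum_val.
Qed.

End FiniteSpan.

Lemma setDDK_sub (T : finType) (A C : {set T}) : A \subset C -> C :\: (C :\: A) = A.
Proof. by move=> sAC; rewrite setDDr setDv set0U; apply/setIidPr. Qed.

Lemma setD_inj_sub (T : finType) (A B C : {set T}) :
  A \subset C -> B \subset C -> C :\: A = C :\: B -> A = B.
Proof. by move=> sAC sBC eAB; rewrite -(setDDK_sub sAC) -(setDDK_sub sBC) eAB. Qed.

Section LeftEmbedding.
Variables n m : nat.
Implicit Types G H : {set 'I_n}.

Definition lshift_set G : {set 'I_(n + m)} := lshift m @: G.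

Lemma mem_lshift_set G j : (lshift m j \in lshift_set G) = (j \in G).
Proof. exact/mem_imset/lshift_inj. Qed.

Lemma rshift_notin_lshift_set G (i : 'I_m) : rshift n i \notin lshift_set G.
Proof. by apply/imsetP => -[j _ /eqP]; rewrite eq_rlshift. Qed.

Lemma card_lshift_set G : #|lshift_set G| = #|G|.
Proof. exact/card_imset/lshift_inj. Qed.

Lemma lshift_set_inj : injective lshift_set.
Proof.
by move=> G H eGH; apply/setP => j; rewrite -mem_lshift_set eGH mem_lshift_set.
Qed.

Lemma sub_lshift_setP (S : {set 'I_(n + m)}) H :
  S \subset lshift_set H -> exists2 G, S = lshift_set G & G \subset H.
Proof.
move/subsetP => sSH; exists [set j | lshift m j \in S].
  apply/setP => x; apply/idP/imsetP => [xS | [j + ->]]; last by rewrite inE.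
  by have /imsetP [j _ exj] := sSH x xS; exists j; rewrite // inE -exj.
by apply/subsetP => j; rewrite inE => /sSH; rewrite mem_lshift_set.
Qed.

Lemma sum_mnm1_lshift G : (\sum_(j in G) U_(lshift m j))%MM = mnm_of_set (lshift_set G).
Proof.
by rewrite -sum_mnm1_set big_imset //; apply: in2W; apply: lshift_inj.
Qed.

End LeftEmbedding.

Section FacetPolynomial.
Variables (n m : nat) (Fs : 'I_m -> {set 'I_n}).
Implicit Types (i : 'I_m) (G : {set 'I_n}) (S : {set 'I_(n + m)}) (mm : 'X_{1..n + m}).

Definition term_set i : {set 'I_(n + m)} := rshift n i |: lshift_set m (Fs i).

Lemma mem_term_set_rshift i i' : (rshift n i' \in term_set i) = (i' == i).
Proof.
rewrite in_setU1 (negbTE (rshift_notin_lshift_set _ _)) orbF.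
exact: (inj_eq (@rshift_inj _ _)).
Qed.

Lemma card_term_set i : #|term_set i| = #|Fs i|.+1.
Proof. by rewrite cardsU1 rshift_notin_lshift_set card_lshift_set. Qed.

Lemma lshift_set_sub_term_set i G : G \subset Fs i -> lshift_set m G \subset term_set i.
Proof. by move=> sGF; apply: subsetU; rewrite imsetS ?orbT. Qed.

Lemma sub_term_set_lshift i S :
  S \subset term_set i -> rshift n i \notin S -> S \subset lshift_set m (Fs i).
Proof.
move=> /subsetP sST niS; apply/subsetP => x xS; have := sST x xS.
by rewrite in_setU1 => /predU1P [exi | //]; rewrite -exi xS in niS.
Qed.

Lemma xmonE G : xmon m G = 'X_[mnm_of_set (lshift_set m G)].
Proof.
by rewrite /xmon -sum_mnm1_lshift (big_morph _ (@mpolyXD _ rat) (@mpolyX0 _ rat)).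
Qed.

Lemma dFE G (p : {mpoly rat[n + m]}) : dF G p = p^`M[mnm_of_set (lshift_set m G)].
Proof.
rewrite -sum_mnm1_lshift -big_enum /= -(big_map _ xpredT (fun x => U_(x)%MM)).
by rewrite mderivm_sum_mnm1 foldr_map.
Qed.

Lemma fpolyE : fpoly Fs = \sum_i 'X_[mnm_of_set (term_set i)].
Proof.
apply: eq_bigr => i _; rewrite -/(xmon m (Fs i)) xmonE -mpolyXD; congr 'X_[_].
by rewrite -!sum_mnm1_set big_setU1 ?rshift_notin_lshift_set.
Qed.

Lemma mderivm_fpoly mm : (fpoly Fs)^`M[mm] =
  \sum_i (if (mm <= mnm_of_set (term_set i))%MM
          then 'X_[(mnm_of_set (term_set i) - mm)%MM] else 0).
Proof. by rewrite fpolyE raddf_sum; apply: eq_bigr => i _; apply: mderivm_mnm_of_set. Qed.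

Lemma dF_fpoly G : dF G (fpoly Fs) =
  \sum_i (if lshift_set m G \subset term_set i
          then 'X_[mnm_of_set (term_set i :\: lshift_set m G)] else 0).
Proof.
rewrite dFE mderivm_fpoly; apply: eq_bigr => i _.
by rewrite lem_mnm_of_set; case: ifP => // /mnm_of_setB ->.
Qed.

Lemma mcoeff_fpoly_term i : (fpoly Fs)@_(mnm_of_set (term_set i)) = 1.
Proof.
rewrite fpolyE raddf_sum (bigD1 i) //= mcoeffX eqxx big1 ?addr0 // => i' ne_i'i.
rewrite mcoeffX; case: eqP => // /mnm_of_set_inj /setP /(_ (rshift n i)).
by rewrite !mem_term_set_rshift eqxx eq_sym (negbTE ne_i'i).
Qed.

Lemma mderivm_fpoly_term i S : S \subset term_set i -> rshift n i \in S ->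
  (fpoly Fs)^`M[mnm_of_set S] = 'X_[mnm_of_set (term_set i :\: S)].
Proof.
move=> sST iS; rewrite mderivm_fpoly (bigD1 i) //= lem_mnm_of_set sST mnm_of_setB //.
rewrite big1 ?addr0 // => i' ne_i'i; rewrite lem_mnm_of_set.
by case: ifP => // /subsetP /(_ _ iS); rewrite mem_term_set_rshift eq_sym (negbTE ne_i'i).
Qed.

Lemma term_setD_inj i i' G G' :
  lshift_set m G \subset term_set i -> lshift_set m G' \subset term_set i' ->
  term_set i :\: lshift_set m G = term_set i' :\: lshift_set m G' -> i = i' /\ G = G'.
Proof.
move=> sGT sGT' eTG; have := congr1 (fun S => rshift n i \in S) eTG.
rewrite /= !in_setD !rshift_notin_lshift_set !mem_term_set_rshift eqxx /=.
move=> /esym/eqP ii'.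
by subst i'; split=> //; apply/lshift_set_inj/(setD_inj_sub sGT sGT' eTG).
Qed.

Lemma sub_is_face G i : G != set0 -> G \subset Fs i -> is_face Fs G.
Proof. by move=> G_neq0 sGF; rewrite /is_face G_neq0; apply/existsP; exists i. Qed.

Lemma mcoeff_family_face (F : face_t Fs) y :
  (lemma6_family Fs y)@_(mnm_of_set (lshift_set m (val F))) = (y == inl F)%:R.
Proof.
case: y => [F'|G] /=.
  rewrite xmonE mcoeffX (inj_eq (@mnm_of_set_inj _)) (inj_eq (@lshift_set_inj _ _)).
  by rewrite (inj_eq val_inj).
rewrite dF_fpoly raddf_sum /= big1 // => i _; case: ifP => _; last by rewrite mcoeff0.
rewrite mcoeffX; case: eqP => // /mnm_of_set_inj /setP /(_ (rshift n i)).
by rewrite in_setD mem_term_set_rshift eqxx !(negbTE (rshift_notin_lshift_set _ _)).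
Qed.

Lemma mcoeff_family_coface (G : face_t Fs) i y : val G \subset Fs i ->
  (lemma6_family Fs y)@_(mnm_of_set (term_set i :\: lshift_set m (val G))) =
  (y == inr G)%:R.
Proof.
move=> /lshift_set_sub_term_set sGT; case: y => [F|G'] /=.
  rewrite xmonE mcoeffX; case: eqP => // /mnm_of_set_inj /setP /(_ (rshift n i)).
  by rewrite in_setD mem_term_set_rshift eqxx !(negbTE (rshift_notin_lshift_set _ _)).
rewrite dF_fpoly raddf_sum (bigD1 i) //= big1 ?addr0 => [|i' ne_i'i]; last first.
  case: ifP => sG'T; last by rewrite mcoeff0.
  rewrite mcoeffX; case: eqP => // /mnm_of_set_inj /(term_setD_inj sG'T sGT) [ei'i _].
  by rewrite ei'i eqxx in ne_i'i.
case: ifP => [sG'T | /negbT nsG'T].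
  rewrite mcoeffX (inj_eq (@mnm_of_set_inj _)); congr (nat_of_bool _)%:R.
  by apply/eqP/eqP => [/(term_setD_inj sG'T sGT) [_ /val_inj ->] | [->]].
by rewrite mcoeff0; case: eqP => // -[eG'G]; rewrite eG'G sGT in nsG'T.
Qed.

Lemma lemma6_family_mcoeff_dual x :
  exists u, forall y, (lemma6_family Fs y)@_u = (y == x)%:R.
Proof.
case: x => [F | G]; first by eexists; apply: mcoeff_family_face.
case/andP: (valP G) => _ /existsP [i sGF].
by eexists => y; exact: mcoeff_family_coface sGF.
Qed.

End FacetPolynomial.

Section UniformFacets.
Variables (n m d : nat) (Fs : 'I_m -> {set 'I_n}).
Hypothesis card_Fs : forall i, #|Fs i| = d.
Implicit Types (i : 'I_m) (G : {set 'I_n}) (mm : 'X_{1..n + m}).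

Lemma tdeg_fpoly i : tdeg (fpoly Fs) = d.+1.
Proof.
have le_size : (msize (fpoly Fs) <= d.+2)%N.
  rewrite fpolyE; apply: leq_trans (msize_sum _ _ _) _; apply/bigmax_leqP => i' _.
  by rewrite msizeX mdeg_mnm_of_set card_term_set card_Fs.
have := @msize_mdeg_lt _ _ (fpoly Fs) (mnm_of_set (term_set Fs i)).
rewrite mcoeff_msupp mcoeff_fpoly_term oner_neq0 mdeg_mnm_of_set card_term_set card_Fs.
by rewrite /tdeg => /(_ isT); move: le_size; case: (msize _) => //= s; lia.
Qed.

Lemma face_card G : is_face Fs G -> (0 < #|G| <= d)%N.
Proof.
case/andP => G_neq0 /existsP [i sGF].
by rewrite card_gt0 G_neq0 -(card_Fs i) subset_leq_card.
Qed.

Lemma mderivm_fpoly_spanned mm :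
  (1 <= mdeg mm)%N -> (mdeg mm <= tdeg (fpoly Fs) - 1)%N ->
  spanned (lemma6_family Fs) ((fpoly Fs)^`M[mm]).
Proof.
move=> mm_gt0 mm_le.
have [/existsP [i le_mT] | /existsPn no_term] :=
  boolP [exists i, (mm <= mnm_of_set (term_set Fs i))%MM]; last first.
  rewrite mderivm_fpoly big1 => [|i _]; [exact: spanned0 | by rewrite ifN].
have [S eS sST] := lem_mnm_of_setP le_mT; subst mm.
rewrite mdeg_mnm_of_set (tdeg_fpoly i) in mm_gt0 mm_le.
have [iS | iNS] := boolP (rshift n i \in S).
- have [G eG sGF] : exists2 G, term_set Fs i :\: S = lshift_set m G & G \subset Fs i.
    apply/sub_lshift_setP/sub_term_set_lshift; first exact: subsetDl.
    by rewrite in_setD iS.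
  have G_face : is_face Fs G.
    apply: (sub_is_face _ sGF); rewrite -card_gt0 -(card_lshift_set m) -eG.
    by rewrite cardsDS // card_term_set card_Fs; lia.
  rewrite (mderivm_fpoly_term sST iS) eG -xmonE.
  exact: (spanned_gen _ (inl (exist _ G G_face))).
- have [G eG sGF] := sub_lshift_setP (sub_term_set_lshift sST iNS).
  have G_face : is_face Fs G.
    by apply: (sub_is_face _ sGF); rewrite -card_gt0 -(card_lshift_set m) -eG.
  by rewrite eG -dFE; exact: (spanned_gen _ (inr (exist _ G G_face))).
Qed.

Lemma mem_dplus_family x : dplus (fpoly Fs) (lemma6_family Fs x).
Proof.
apply: in_span_gen; case: x => -[G G_face] /=; have := face_card G_face;
  case/andP: G_face => _ /existsP [i sGF]; rewrite (tdeg_fpoly i) => /andP [G_gt0 G_le].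
- have sLT := lshift_set_sub_term_set sGF.
  exists (mnm_of_set (term_set Fs i :\: lshift_set m G)).
  rewrite mdeg_mnm_of_set cardsDS // card_term_set card_Fs card_lshift_set.
  do 2 (split; first lia).
  rewrite (mderivm_fpoly_term (subsetDl _ _)) ?setDDK_sub ?xmonE //.
  by rewrite in_setD rshift_notin_lshift_set mem_term_set_rshift eqxx.
- exists (mnm_of_set (lshift_set m G)).
  by rewrite mdeg_mnm_of_set card_lshift_set dFE; do 2 (split; first lia).
Qed.

End UniformFacets.

Local Close Scope ring_scope.

Theorem lemma6 (n m d : nat) (Fs : 'I_m -> {set 'I_n})
    (hd : forall i, #|Fs i| = d) :
  is_basis (dplus (fpoly Fs)) (lemma6_family Fs) /\
  has_dim (dplus (fpoly Fs)) (2 * #|[set Y : {set 'I_n} | is_face Fs Y]|).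
Proof.
have basis : is_basis (dplus (fpoly Fs)) (lemma6_family Fs).
  split; first exact: mem_dplus_family hd.
  - exact/free_of_mcoeff_dual/lemma6_family_mcoeff_dual.
  - move=> p; apply: spanned_in_span => _ [mm [mm_gt0 [mm_le ->]]].
    exact: (mderivm_fpoly_spanned hd).
split=> //; have := has_dim_card basis.
by rewrite card_sum card_sig cardsE mul2n addnn.
Qed.
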